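(* Let $\mathcal{C}$ be the structure described in the context. Then for every $n\in\omega$ with $n\ge1$, the formula $\bigwedge_{i<n}R(x,y_i)$ does not witness SOP$_2$ modulo $\mathrm{Th}(\mathcal{C})$.
   Context: ${}^{\omega>}2$ is the binary tree of finite $0/1$-sequences with initial-segment order $\trianglelefteq$; ${}^{n>}2$ is the set of sequences of length $<n$. A set $X$ is an antichain if its elements are pairwise $\trianglelefteq$-incomparable; a maximal antichain in ${}^{n>}2$ is an antichain $X\subseteq{}^{n>}2$ not properly contained in another antichain of ${}^{n>}2$. The language is $\{R\}$ with $R$ binary. $\mathcal{C}$ has universe the disjoint union of $A=\{a_X: X$ a maximal antichain in ${}^{n>}2$ for some $n<\omega\}$ and $B=\{b_\eta:\eta\in{}^{\omega>}2\}$, with $R^{\mathcal{C}}=\{(a_X,b_\eta):\eta\in X\}$. A formula $\psi(x,\bar z)$ witnesses SOP$_2$ modulo a theory if in a monster model there is $\langle \bar c_\eta\rangle_{\eta\in{}^{\omega>}2}$ such that $\{\psi(x,\bar c_{\eta\lceil m}):m<\omega\}$ is consistent for each $\eta\in{}^\omega2$ and $\{\psi(x,\bar c_\eta),\psi(x,\bar c_\nu)\}$ is inconsistent for all $\trianglelefteq$-incomparable $\eta,\nu$. Here $y_0,\dots,y_{n-1}$ are distinct single variables. *)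

From mathcomp Require Import all_boot.
Set Implicit Arguments. Unset Strict Implicit. Unset Printing Implicit Defensive.

(* Finite 0/1-sequences are [seq bool]; s ⊴ t is [prefix s t]. *)
Definition tle (s t : seq bool) : Prop := prefix s t.
Definition incomparable (s t : seq bool) : Prop := ~ tle s t /\ ~ tle t s.

Definition below (n : nat) (s : seq bool) : Prop := size s < n.

Definition antichain (X : seq bool -> Prop) : Prop :=
  forall s t, X s -> X t -> s <> t -> incomparable s t.

Definition max_antichain (n : nat) (X : seq bool -> Prop) : Prop :=
  (forall s, X s -> below n s) /\ antichain X /\
  (forall Y : seq bool -> Prop,
      antichain Y -> (forall s, Y s -> below n s) ->
      (forall s, X s -> Y s) -> (forall s, Y s -> X s)).

Definition Aset : Type :=
  { X : seq bool -> Prop | exists n : nat, max_antichain n X }.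

(* universe: disjoint union of A (inl a_X) and B (inr b_eta) *)
Definition Cuniv : Type := (Aset + seq bool)%type.

Definition CR (u w : Cuniv) : Prop :=
  match u, w with
  | inl X, inr eta => proj1_sig X eta
  | _, _ => False
  end.

Inductive form : Type :=
  | FR : nat -> nat -> form
  | FEq : nat -> nat -> form
  | FNeg : form -> form
  | FAnd : form -> form -> form
  | FEx : nat -> form -> form.

Fixpoint fv (f : form) : seq nat :=
  match f with
  | FR i j => [:: i; j]
  | FEq i j => [:: i; j]
  | FNeg g => fv g
  | FAnd g h => fv g ++ fv h
  | FEx i g => filter (fun k => k != i) (fv g)
  end.

Definition sentence (f : form) : Prop := fv f = [::].

Definition upd {M : Type} (v : nat -> M) (i : nat) (a : M) : nat -> M :=
  fun k => if k == i then a else v k.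

Fixpoint sat {M : Type} (RM : M -> M -> Prop) (v : nat -> M) (f : form) : Prop :=
  match f with
  | FR i j => RM (v i) (v j)
  | FEq i j => v i = v j
  | FNeg g => ~ sat RM v g
  | FAnd g h => sat RM v g /\ sat RM v h
  | FEx i g => exists a : M, sat RM (upd v i a) g
  end.

Definition holds {M : Type} (RM : M -> M -> Prop) (f : form) : Prop :=
  forall v : nat -> M, sat RM v f.

Definition model_of_ThC (M : Type) (RM : M -> M -> Prop) : Prop :=
  inhabited M /\
  forall f : form, sentence f -> holds CR f -> holds RM f.

Definition psi {M : Type} (RM : M -> M -> Prop) (n : nat) (x : M) (c : 'I_n -> M)
  : Prop := forall i : 'I_n, RM x (c i).

Definition restr (eta : nat -> bool) (m : nat) : seq bool := mkseq eta m.

(* psi witnesses SOP_2 modulo Th(C): in some model M of Th(C) there is a tree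
   of parameters (c_eta) such that, for each branch, the set
   {psi(x, c_{eta|m}) : m < omega} is consistent (i.e. finitely satisfiable in M,
   equivalently consistent with the elementary diagram of M / realized in a
   monster model), and for incomparable eta, nu the pair is inconsistent. *)
Definition witnesses_SOP2_ThC (n : nat) : Prop :=
  exists (M : Type) (RM : M -> M -> Prop) (c : seq bool -> 'I_n -> M),
    model_of_ThC RM /\
    (forall (eta : nat -> bool) (k : nat),
        exists x : M, forall m, m < k -> psi RM x (c (restr eta m))) /\
    (forall eta nu : seq bool, incomparable eta nu ->
        ~ exists x : M, psi RM x (c eta) /\ psi RM x (c nu)).

From mathcomp Require Import all_boot zify.
From Stdlib Require Import Classical.
Set Implicit Arguments. Unset Strict Implicit. Unset Printing Implicit Defensive.

(* Write D(u, v) when u and v have a common R-predecessor.  In C two points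
   b_p, b_q satisfy D iff p = q or p, q are incomparable, because every finite
   antichain extends to a maximal antichain of some ^{n>}2.  Hence every finite
   D-clique has a common R-predecessor, and D obeys a four-point law: if D x x',
   D z z' and no cross pair is D-related, then x = x' or z = z' (two incomparable
   pairs of nodes cannot be pairwise cross-comparable).  Both facts are
   first-order, so they hold in every model of Th(C).  There an SOP_2 tree for
   /\_{i<n} R(x, y_i) yields a tree of n-tuples whose components are D-related
   along branches, while two incomparable nodes carry some D-unrelated pair of
   components, since otherwise the clique law would make the two instances of
   the formula consistent.  A Ramsey theorem for colourings of the binary tree
   finds, in any high enough such tree, two subtrees and components i, j that
   are never D-related across them; by the four-point law one of these
   components is constant on its subtree, and dropping it lowers n.  For n = 0
   there is no such tree of height 2. *)

Section PrefixComparable.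
Variable T : eqType.
Implicit Types s t p q r : seq T.

Lemma prefix_anti : antisymmetric (@prefix T).
Proof.
move=> s t /andP[st ts]; move: (st); rewrite prefixE => /eqP <-.
have -> : size s = size t by apply/anti_leq; rewrite !size_prefix.
by rewrite take_size.
Qed.

Definition prefix_comparable s t := prefix s t || prefix t s.

Lemma prefix_comparableC s t : prefix_comparable s t = prefix_comparable t s.
Proof. by rewrite /prefix_comparable orbC. Qed.

Lemma prefix_comparable_prefixes p q r :
  prefix p r -> prefix q r -> prefix_comparable p q.
Proof.
rewrite /prefix_comparable !prefixE => /eqP rp /eqP rq.
have [le_pq|/ltnW le_qp] := leqP (size p) (size q).
  by rewrite -rq take_takel // rp eqxx.
by rewrite -rp take_takel // rq eqxx orbT.
Qed.

Lemma comparable_incomparable_prefix (p p' q : seq T) :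
  prefix_comparable p q -> prefix_comparable p' q -> ~~ prefix_comparable p p' ->
  prefix q p && prefix q p'.
Proof.
case/orP=> [pq|qp] /orP[p'q|qp'] npp'.
- by rewrite (prefix_comparable_prefixes pq p'q) in npp'.
- by rewrite /prefix_comparable (prefix_trans pq qp') in npp'.
- by rewrite /prefix_comparable (prefix_trans p'q qp) orbT in npp'.
- by rewrite qp qp'.
Qed.

Lemma incomparable_pairs_not_cross_comparable (p p' q q' : seq T) :
  ~~ prefix_comparable p p' -> ~~ prefix_comparable q q' ->
  prefix_comparable p q -> prefix_comparable p q' ->
  prefix_comparable p' q -> prefix_comparable p' q' -> False.
Proof.
move=> npp' nqq' pq pq' p'q p'q'.
have /andP[qp _] := comparable_incomparable_prefix pq p'q npp'.
have /andP[pq1 _] : prefix p q && prefix p q'.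
  by apply: comparable_incomparable_prefix; rewrite // prefix_comparableC.
have /andP[q'p _] := comparable_incomparable_prefix pq' p'q' npp'.
have e_pq : p = q by apply: prefix_anti; rewrite pq1 qp.
by move: nqq'; rewrite -e_pq /prefix_comparable q'p orbT.
Qed.

End PrefixComparable.

Lemma incomparableE (s t : seq bool) :
  incomparable s t <-> ~~ prefix_comparable s t.
Proof.
rewrite /incomparable /tle /prefix_comparable negb_or.
by split=> [[/negP-> /negP->]|/andP[/negP ? /negP ?]].
Qed.

Lemma incomparable_sym (s t : seq bool) : incomparable s t -> incomparable t s.
Proof. by case. Qed.

Lemma incomparable_cons (b : bool) s t :
  incomparable (b :: s) (b :: t) <-> incomparable s t.
Proof. by rewrite /incomparable /tle /= eqxx. Qed.

Lemma incomparable_eqsize (s t : seq bool) : size s = size t -> s <> t -> incomparable s t.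
Proof.
have eq_prefix u v : prefix u v -> size u = size v -> u = v.
  by rewrite prefixE => /eqP uv e; rewrite -uv e take_size.
by move=> e ne; split=> st; apply: ne; [|apply/esym]; apply: eq_prefix.
Qed.

(** * Ramsey's theorem for the binary tree *)

Definition tree_emb d N (g : seq bool -> seq bool) :=
  [/\ forall s, size s < d -> size (g s) < N,
      forall s t, size s < d -> size t < d -> prefix s t -> prefix (g s) (g t) &
      forall s t, size s < d -> size t < d -> incomparable s t ->
        incomparable (g s) (g t)].

Lemma tree_emb_widen d N N' g : N <= N' -> tree_emb d N g -> tree_emb d N' g.
Proof. by move=> le_NN' [gN gp gi]; split=> // s /gN /leq_trans; apply. Qed.

Lemma tree_emb_comp d N K g1 g2 :
  tree_emb d N g1 -> tree_emb N K g2 -> tree_emb d K (g2 \o g1).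
Proof.
move=> [a1 p1 i1] [a2 p2 i2]; split=> [s hs|s t hs ht st|s t hs ht st] /=.
- exact/a2/a1.
- by apply: p2; [apply: a1|apply: a1|apply: p1].
- by apply: i2; [apply: a1|apply: a1|apply: i1].
Qed.

Lemma tree_emb_cons d N g (b : bool) :
  tree_emb d N g -> tree_emb d N.+1 (cons b \o g).
Proof.
move=> [a p i]; split=> [s hs|s t hs ht st|s t hs ht st] /=.
- by rewrite ltnS a.
- by rewrite eqxx p.
- exact/incomparable_cons/i.
Qed.

Definition tree_join (g0 g1 : seq bool -> seq bool) (s : seq bool) :=
  if s is b :: s' then b :: (if b then g1 s' else g0 s') else [::].

Lemma tree_emb_join d N g0 g1 :
  tree_emb d N g0 -> tree_emb d N g1 -> tree_emb d.+1 N.+1 (tree_join g0 g1).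
Proof.
move=> [a0 p0 i0] [a1 p1 i1]; split.
- by case=> [|[] s] //= hs; rewrite ltnS ?a0 ?a1.
- case=> [|x s] [|y t] //= hs ht.
  by case/andP=> /eqP<-; case: x hs ht => /= hs ht st; [apply: p1|apply: p0].
have nil_cmp u : ~ incomparable [::] u by case; rewrite /tle prefix0s.
case=> [|x s] [|y t] hs ht.
- by move/nil_cmp.
- by move/nil_cmp.
- by move/incomparable_sym/nil_cmp.
case: x y hs ht => [] [] //= hs ht.
- by move/incomparable_cons=> st; apply/incomparable_cons; apply: i1.
- by move/incomparable_cons=> st; apply/incomparable_cons; apply: i0.
Qed.

Definition tree_homog d N (P : seq bool -> Prop) :=
  exists2 g, tree_emb d N g & forall s, size s < d -> P (g s).

Lemma tree_homog_emb d N K P g :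
  tree_homog d N (P \o g) -> tree_emb N K g -> tree_homog d K P.
Proof.
move=> [h eh Ph] eg; exists (g \o h); first exact: tree_emb_comp eh eg.
exact: Ph.
Qed.

Lemma tree_homog_cons d N P (b : bool) :
  tree_homog d N (P \o cons b) -> tree_homog d N.+1 P.
Proof. by move=> [g eg Pg]; exists (cons b \o g); [apply: tree_emb_cons|]. Qed.

Lemma tree_homog_join d N P : P [::] ->
  tree_homog d N (P \o cons false) -> tree_homog d N (P \o cons true) ->
  tree_homog d.+1 N.+1 P.
Proof.
move=> P0 [g0 e0 P0g] [g1 e1 P1g]; exists (tree_join g0 g1).
  exact: tree_emb_join.
by case=> [|[] s] //= hs; [apply: P1g|apply: P0g].
Qed.

Lemma tree_ramsey2 a b P :
  tree_homog a (a + b) P \/ tree_homog b (a + b) (fun s => ~ P s).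
Proof.
elim: a b P => [|a IHa] b P; first by left; exists id.
elim: b P => [|b IHb] P; first by right; exists id; rewrite ?addn0.
have [P0|nP0] := classic (P [::]).
- rewrite addSn.
  have [h0|h0] := IHa b.+1 (P \o cons false); last by right; apply: tree_homog_cons h0.
  have [h1|h1] := IHa b.+1 (P \o cons true); last by right; apply: tree_homog_cons h1.
  by left; apply: tree_homog_join.
- rewrite addnS.
  have [h0|h0] := IHb (P \o cons false); first by left; apply: tree_homog_cons h0.
  have [h1|h1] := IHb (P \o cons true); first by left; apply: tree_homog_cons h1.
  by right; apply: tree_homog_join.
Qed.

Lemma tree_ramsey (X : eqType) (L : seq X) d : exists N,
  forall col : seq bool -> X -> Prop,
  (forall s, size s < N -> exists2 x, x \in L & col s x) ->
  exists2 x, x \in L & tree_homog d N (col^~ x).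
Proof.
elim: L => [|x0 L [N IH]]; first by exists 1 => col /(_ [::] isT) [].
exists (d + N) => col col_total.
have [hx0|[g eg ng]] := tree_ramsey2 d N (col^~ x0); first by exists x0; rewrite ?mem_head.
have [s hs|x xL hx] := IH (col \o g).
  have [g_size _ _] := eg; have [x] := col_total (g s) (g_size s hs).
  rewrite inE => /predU1P[-> /(ng s hs)//|xL cx]; by exists x.
by exists x; [rewrite inE xL orbT|apply: tree_homog_emb hx eg].
Qed.

Lemma tree_ramsey_multi (X Y : eqType) (L : seq X) (I : seq Y) d : exists N,
  forall col : Y -> seq bool -> X -> Prop,
  (forall t, t \in I -> forall u, size u < N -> exists2 x, x \in L & col t u x) ->
  exists2 g, tree_emb d N g &
    forall t, t \in I -> exists2 x, x \in L & forall u, size u < d -> col t (g u) x.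
Proof.
elim: I => [|t0 I [N IH]]; first by exists d => col _; exists id.
have [K HK] := tree_ramsey L N.
exists K => col col_total.
have [|x0 x0L [g1 e1 h1]] := HK (col t0).
  by move=> u hu; apply: col_total; rewrite ?mem_head.
have [g1_size _ _] := e1.
have [|g2 e2 h2] := IH (fun t u x => col t (g1 u) x).
  by move=> t tI u hu; apply: col_total; [rewrite inE tI orbT|apply: g1_size].
exists (g1 \o g2); first exact: tree_emb_comp e2 e1.
have [g2_size _ _] := e2.
move=> t; rewrite inE => /predU1P[->|/h2//].
by exists x0 => // u hu; apply/h1/g2_size.
Qed.

Fixpoint tree_nodes k : seq (seq bool) :=
  if k is k'.+1 then
    [::] :: map (cons false) (tree_nodes k') ++ map (cons true) (tree_nodes k')
  else [::].

Lemma mem_tree_nodes k s : (s \in tree_nodes k) = (size s < k).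
Proof.
elim: k s => [|k IH] [|b s] //=; rewrite in_cons /= mem_cat ltnS -IH.
apply/orP/idP => [[]/mapP[t t_k [_ ->]] //|s_k].
by case: b; [right|left]; apply/mapP; exists s.
Qed.

(** * Trees of tuples and the four-point law *)

Definition four_point (M : Type) (D : M -> M -> Prop) := forall x x' z z',
  D x x' -> D z z' -> ~ D x z -> ~ D x z' -> ~ D x' z -> ~ D x' z' -> x = x' \/ z = z'.

Section SOP2Array.
Variables (M : Type) (D : M -> M -> Prop).

(* [S s i] stands for the [i]-th parameter at node [s] of an SOP_2 tree. *)
Definition sop2_array n d (S : seq bool -> nat -> M) :=
  (forall s t i j, size s < d -> size t < d -> prefix s t -> i < n -> j < n ->
     D (S s i) (S t j)) /\
  (forall s t, size s < d -> size t < d -> incomparable s t ->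
     exists i j, [/\ i < n, j < n & ~ D (S s i) (S t j)]).

Lemma sop2_array_root n d S k : sop2_array n d S -> k < n ->
  forall t, size t < d -> D (S [::] k) (S t k).
Proof.
by move=> [along _] hk t ht; apply: along; rewrite ?prefix0s // (leq_ltn_trans _ ht).
Qed.

Lemma sop2_array_emb n d K S g (b : bool) : sop2_array n K.+1 S -> tree_emb d K g ->
  sop2_array n d (fun t => S (b :: g t)).
Proof.
move=> [along across] [g_size g_prefix g_incomp]; split=> [s t i j hs ht st|s t hs ht st].
  by apply: along; rewrite /= ?ltnS ?g_size ?eqxx ?g_prefix.
by apply: across; rewrite /= ?ltnS ?g_size //; apply/incomparable_cons/g_incomp.
Qed.

Lemma sop2_array_drop n d S j : sop2_array n.+1 d S -> j < n.+1 ->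
  (forall t, size t < d -> S t j = S [::] j) ->
  sop2_array n d (fun t k => S t (bump j k)).
Proof.
move=> [along across] hj S_const; split=> [s t i k hs ht st hi hk|s t hs ht st].
  by apply: along; rewrite // /bump; case: (j <= _); lia.
have S_const2 u v : size u < d -> size v < d -> S u j = S v j.
  by move=> hu hv; rewrite S_const ?(S_const v).
have [i1 [i2 [hi1 hi2 nD]]] := across s t hs ht st.
have [e1|ne1] := eqVneq i1 j.
  by case: nD; rewrite e1 (S_const2 s t) //; apply: along; rewrite ?prefix_refl -?e1.
have [e2|ne2] := eqVneq i2 j.
  by case: nD; rewrite e2 (S_const2 t s) //; apply: along; rewrite ?prefix_refl -?e2.
have unbump_lt i : i < n.+1 -> i != j -> unbump j i < n.
  by rewrite /unbump; case: ltngtP => //; lia.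
exists (unbump j i1), (unbump j i2).
by rewrite !unbumpK ?inE ?unbump_lt.
Qed.

Lemma sop2_array_cross n d : exists K, forall S, sop2_array n K.+1 S ->
  exists gA gB i j, [/\ tree_emb d K gA, tree_emb d K gB, i < n, j < n &
    forall t u, size t < d -> size u < d ->
      ~ D (S (false :: gA t) i) (S (true :: gB u) j)].
Proof.
pose L := enum {: 'I_n * 'I_n}.
have [KA HA] := tree_ramsey L d.
have [KB HB] := tree_ramsey_multi L (tree_nodes KA) d.
exists (maxn KA KB) => S [_ across].
have [t|gB eB hB] := HB (fun t u (x : 'I_n * 'I_n) =>
    ~ D (S (false :: t) x.1) (S (true :: u) x.2)).
  rewrite mem_tree_nodes => ht u hu.
  have [||| i [j [hi hj nD]]] := across (false :: t) (true :: u).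
  - by rewrite /= ltnS leq_max ht.
  - by rewrite /= ltnS leq_max hu orbT.
  - by rewrite incomparableE.
  by exists (Ordinal hi, Ordinal hj); rewrite ?mem_enum.
have [t ht|[i j] _ [gA eA hA]] := HA (fun t (x : 'I_n * 'I_n) =>
    forall u, size u < d -> ~ D (S (false :: t) x.1) (S (true :: gB u) x.2)).
  by apply: hB; rewrite mem_tree_nodes.
exists gA, gB, i, j; split=> //; last by move=> t u ht; apply: hA.
- by apply: tree_emb_widen eA; rewrite leq_maxl.
- by apply: tree_emb_widen eB; rewrite leq_maxr.
Qed.

Hypothesis D_four_point : four_point D.

Lemma four_point_const d (f g : seq bool -> M) :
  (forall t, size t < d -> D (f [::]) (f t)) ->
  (forall u, size u < d -> D (g [::]) (g u)) ->
  (forall t u, size t < d -> size u < d -> ~ D (f t) (g u)) ->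
  (forall t, size t < d -> f t = f [::]) \/ (forall u, size u < d -> g u = g [::]).
Proof.
move=> Df Dg nD; case: (classic (forall t, size t < d -> f t = f [::])); first by left.
move=> /not_all_ex_not[t not_const]; have [ht ne] := imply_to_and _ _ not_const.
right=> u hu.
have h0 : size (@nil bool) < d := leq_ltn_trans (leq0n _) ht.
have [/esym //|//] := D_four_point (Df t ht) (Dg u hu)
  (nD _ _ h0 h0) (nD _ _ h0 hu) (nD _ _ ht h0) (nD _ _ ht hu).
Qed.

Lemma no_sop2_array n : exists d, forall S, ~ sop2_array n d S.
Proof.
elim: n => [|n [d IH]].
  exists 2 => S [_ across].
  by have [||| i [j [//]]] := across [:: false] [:: true]; rewrite ?incomparableE.
have [K HK] := sop2_array_cross n.+1 d.
exists K.+1 => S aS.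
have [gA [gB [i [j [eA eB hi hj nD]]]]] := HK S aS.
have aA := sop2_array_emb false aS eA; have aB := sop2_array_emb true aS eB.
have [constA|constB] := four_point_const
  (sop2_array_root aA hi) (sop2_array_root aB hj) nD.
- exact: IH _ (sop2_array_drop aA hi constA).
- exact: IH _ (sop2_array_drop aB hj constB).
Qed.

End SOP2Array.

(** * First-order sentences *)

Definition FImp f g := FNeg (FAnd f (FNeg g)).
Definition FOr f g := FNeg (FAnd (FNeg f) (FNeg g)).
Definition FAll i f := FNeg (FEx i (FNeg f)).
Definition FTrue := FEx 0 (FEq 0 0).
Definition FAnds (l : seq nat) (F : nat -> form) :=
  foldr (fun a g => FAnd (F a) g) FTrue l.
Fixpoint FAlls k f := if k is k'.+1 then FAlls k' (FAll k' f) else f.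
Definition FCopred a i j := FEx a (FAnd (FR a i) (FR a j)).

Definition copred (M : Type) (RM : M -> M -> Prop) (u w : M) :=
  exists a, RM a u /\ RM a w.

(* Variables [0 .. k-1] form the clique, [k] is their common predecessor and
   [k.+1] is bound inside [FCopred]. *)
Definition clique_formula k :=
  FImp (FAnds (iota 0 k) (fun a => FAnds (iota 0 k) (FCopred k.+1 a)))
       (FEx k (FAnds (iota 0 k) (FR k))).

Definition clique_sentence k := FAlls k (clique_formula k).

Definition four_point_formula :=
  FImp (FAnd (FCopred 4 0 1) (FAnd (FCopred 4 2 3)
         (FAnd (FNeg (FCopred 4 0 2)) (FAnd (FNeg (FCopred 4 0 3))
           (FAnd (FNeg (FCopred 4 1 2)) (FNeg (FCopred 4 1 3)))))))
       (FOr (FEq 0 1) (FEq 2 3)).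

Definition four_point_sentence := FAlls 4 four_point_formula.

Definition cliques_have_common_pred (M : Type) (RM : M -> M -> Prop) k :=
  forall w : nat -> M, (forall a b, a < k -> b < k -> copred RM (w a) (w b)) ->
  exists m, forall a, a < k -> RM m (w a).

Lemma fv_FAlls k f : fv (FAlls k f) = [seq x <- fv f | k <= x].
Proof.
elim: k f => [|k IH] f /=; first by rewrite filter_predT.
rewrite IH -filter_predI; apply: eq_filter => x /=.
by rewrite ltn_neqAle eq_sym andbC.
Qed.

Lemma sentence_FAlls k f : {subset fv f <= gtn k} -> sentence (FAlls k f).
Proof.
move=> fv_lt; rewrite /sentence fv_FAlls; apply/eqP; rewrite -[_ == _]negbK -has_filter.
by apply/hasPn => x /fv_lt; rewrite /= -ltnNge.
Qed.

Lemma fv_FAnds l F x : x \in fv (FAnds l F) -> exists2 a, a \in l & x \in fv (F a).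
Proof.
elim: l => [|a l IH] //=; rewrite mem_cat => /orP[|/IH[b bl xb]].
  by exists a; rewrite ?mem_head.
by exists b; rewrite // inE bl orbT.
Qed.

Lemma fv_FCopred c a b : {subset fv (FCopred c a b) <= [:: a; b]}.
Proof.
have -> : fv (FCopred c a b) = [seq x <- [:: c; a; c; b] | x != c] by [].
by move=> x; rewrite mem_filter !inE => /andP[/negPf->].
Qed.

Lemma sentence_clique k : sentence (clique_sentence k).
Proof.
apply: sentence_FAlls => x; rewrite mem_cat => /orP[].
  move=> /fv_FAnds[a + /fv_FAnds[b + /fv_FCopred]]; rewrite !mem_iota !inE.
  by move=> ak bk /orP[]/eqP->.
rewrite /= mem_filter => /andP[xk /fv_FAnds[a]]; rewrite mem_iota !inE (negbTE xk).
by move=> ak /eqP->.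
Qed.

Lemma sentence_four_point : sentence four_point_sentence.
Proof. by []. Qed.

Section Semantics.
Variables (M : Type) (RM : M -> M -> Prop).

Lemma eq_sat f v w : v =1 w -> sat RM v f <-> sat RM w f.
Proof.
elim: f v w => [i j|i j|g IH|g IHg h IHh|i g IH] v w e /=.
- by rewrite !e.
- by rewrite !e.
- by rewrite (IH v w e).
- by rewrite (IHg v w e) (IHh v w e).
- have e_upd a : upd v i a =1 upd w i a by move=> x; rewrite /upd e.
  by split=> -[a ha]; exists a; apply/(IH _ _ (e_upd a)).
Qed.

Lemma sat_FAll v i f : sat RM v (FAll i f) <-> forall a, sat RM (upd v i a) f.
Proof.
split=> [h a|h [a /(_ (h a))]] //.
by apply: NNPP => nf; apply: h; exists a.
Qed.

Lemma sat_FAlls k f v :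
  sat RM v (FAlls k f) <-> forall w, sat RM (fun x => if x < k then w x else v x) f.
Proof.
elim: k f v => [|k IH] f v /=; first by split=> [h w|/(_ v)].
rewrite IH; split=> h w.
  have := (sat_FAll _ _ _).1 (h w) (w k); apply/(eq_sat _ _).1 => x.
  by rewrite /upd ltnS; case: ltngtP => // ->.
apply/sat_FAll => a; apply/(eq_sat _ _).1: (h (upd w k a)) => x.
by rewrite /upd ltnS; case: ltngtP.
Qed.

Lemma sat_FAnds v l F : sat RM v (FAnds l F) <-> forall a, a \in l -> sat RM v (F a).
Proof.
elim: l => [|a l IH] /=; first by split=> // _; exists (v 0).
rewrite IH; split=> [[Fa Fl] b /predU1P[->|/Fl]|Fl] //.
by split=> [|b bl]; apply: Fl; rewrite inE ?eqxx ?bl ?orbT.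
Qed.

Lemma sat_FCopred v a i j : i != a -> j != a ->
  sat RM v (FCopred a i j) <-> copred RM (v i) (v j).
Proof. by move=> /negPf ia /negPf ja; rewrite /= /upd eqxx ia ja. Qed.

Lemma sat_FImp v f g : sat RM v (FImp f g) <-> (sat RM v f -> sat RM v g).
Proof. by split=> [h hf|h [/h]//]; apply: NNPP => ng; apply: h. Qed.

Lemma sat_FOr v f g : sat RM v (FOr f g) <-> sat RM v f \/ sat RM v g.
Proof. by split=> [/not_and_or[]/NNPP|[]]; [left|right|move=> ? []|move=> ? []]. Qed.

Lemma holds_FAlls k f : holds RM (FAlls k f) <-> forall w, sat RM w f.
Proof.
split=> [h w|h v]; last by apply/sat_FAlls.
by apply/(eq_sat _ _).1: ((sat_FAlls _ _ _).1 (h w) w) => x; rewrite if_same.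
Qed.

Lemma sat_four_point_formula u : sat RM u four_point_formula <->
  (copred RM (u 0) (u 1) -> copred RM (u 2) (u 3) ->
   ~ copred RM (u 0) (u 2) -> ~ copred RM (u 0) (u 3) ->
   ~ copred RM (u 1) (u 2) -> ~ copred RM (u 1) (u 3) -> u 0 = u 1 \/ u 2 = u 3).
Proof. by rewrite sat_FImp sat_FOr /= /upd /= /copred; tauto. Qed.

Lemma holds_four_point_sentence : holds RM four_point_sentence <-> four_point (copred RM).
Proof.
rewrite holds_FAlls; split=> [h x x' z z'|h u].
  exact: (sat_four_point_formula (nth x [:: x; x'; z; z'])).1 (h _).
exact/sat_four_point_formula/h.
Qed.

Lemma sat_clique_formula k u : sat RM u (clique_formula k) <->
  ((forall a b, a < k -> b < k -> copred RM (u a) (u b)) ->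
   exists m, forall a, a < k -> RM m (u a)).
Proof.
have pairwise : sat RM u (FAnds (iota 0 k) (fun a => FAnds (iota 0 k) (FCopred k.+1 a)))
    <-> (forall a b, a < k -> b < k -> copred RM (u a) (u b)).
  have in_k a : (a \in iota 0 k) = (a < k) by rewrite mem_iota.
  have ne_k a : a < k -> a != k.+1 by move=> ak; rewrite neq_ltn ltnS ltnW.
  rewrite sat_FAnds; split=> [h a b ak bk|h a].
    move: (h a); rewrite in_k => /(_ ak)/sat_FAnds/(_ b); rewrite in_k => /(_ bk).
    exact: (sat_FCopred _ (ne_k _ ak) (ne_k _ bk)).1.
  rewrite in_k => ak; apply/sat_FAnds => b; rewrite in_k => bk.
  exact/(sat_FCopred _ (ne_k _ ak) (ne_k _ bk))/h.
have common m : sat RM (upd u k m) (FAnds (iota 0 k) (FR k)) <->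
    forall a, a < k -> RM m (u a).
  have e a : a < k -> sat RM (upd u k m) (FR k a) <-> RM m (u a).
    by move=> ak; rewrite /= /upd eqxx ltn_eqF.
  rewrite sat_FAnds; split=> h a => [ak|]; last rewrite mem_iota => ak.
    by apply/(e a ak)/h; rewrite mem_iota.
  exact/(e a ak)/h.
rewrite sat_FImp pairwise; split=> h /h [m hm]; exists m; exact/common.
Qed.

Lemma holds_clique_sentence k :
  holds RM (clique_sentence k) <-> cliques_have_common_pred RM k.
Proof.
rewrite holds_FAlls; split=> [h w|h u]; first exact/sat_clique_formula.
exact/sat_clique_formula/h.
Qed.
End Semantics.

(** * The structure C and models of its theory *)

Definition saturation (F : seq (seq bool)) m p :=
  p \in F \/ (size p = m.+1 /\ forall f, f \in F -> incomparable f p).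

Lemma max_antichain_saturation F m :
  (forall p q, p \in F -> q \in F -> p = q \/ incomparable p q) ->
  (forall p, p \in F -> size p <= m) ->
  max_antichain m.+2 (saturation F m).
Proof.
move=> F_anti F_size; split; [|split].
- by move=> s; rewrite /below ltnS => -[/F_size/leqW|[-> _]].
- move=> s t [sF|[ss s_inc]] [tF|[st t_inc]] ne.
  + by case: (F_anti s t sF tF).
  + exact: t_inc.
  + exact/incomparable_sym/s_inc.
  + by apply: incomparable_eqsize; rewrite ?ss.
move=> Y Y_anti Y_below XY s Ys.
(* Pad [s] to [s'] of length [m.+1]: either [s'] lies in the saturation, or it
   extends some [f] in [F], which then is comparable to [s]. *)
have [sF|sF] := boolP (s \in F); first by left.
pose s' := s ++ nseq (m.+1 - size s) false.
have size_s' : size s' = m.+1 by rewrite size_cat size_nseq subnKC // -ltnS; apply: Y_below.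
have [s'_inc|] := classic (forall f, f \in F -> incomparable f s').
  have Ys' : Y s' by apply: XY; right.
  have [->|ne] := classic (s = s'); first by right.
  by case: (Y_anti s s' Ys Ys' ne); rewrite /tle prefix_prefix.
move=> /not_all_ex_not[f f_F_cmp]; have [fF f_cmp] := imply_to_and _ _ f_F_cmp.
have f_s' : prefix f s'.
  have : prefix_comparable f s' by apply/negPn/negP => /incomparableE.
  case/orP=> // /size_prefix; rewrite size_s' => /leq_trans/(_ (F_size f fF)).
  by rewrite ltnn.
have ne : s <> f by move=> e; rewrite e fF in sF.
have := Y_anti s f Ys (XY f (or_introl fF)) ne.
by rewrite incomparableE (prefix_comparable_prefixes (prefix_prefix _ _) f_s').
Qed.

Lemma Aset_extend (F : seq (seq bool)) :
  (forall p q, p \in F -> q \in F -> p = q \/ incomparable p q) ->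
  exists X : Aset, forall p, p \in F -> proj1_sig X p.
Proof.
move=> F_anti; pose m := \max_(p <- F) size p.
have F_size p : p \in F -> size p <= m by move=> pF; apply: leq_bigmax_seq.
have X_max := max_antichain_saturation F_anti F_size.
by exists (exist _ (saturation F m) (ex_intro _ m.+2 X_max)) => p; left.
Qed.

Lemma CR_inr a u : CR a u -> exists p, u = inr p.
Proof. by case: a; case: u => // p X _; exists p. Qed.

Lemma copredC_inr p q : copred CR (inr p) (inr q) <-> p = q \/ incomparable p q.
Proof.
split=> [[a []]|pq].
  case: a => // X Xp Xq.
  have [N [_ [X_anti _]]] := proj2_sig X.
  by have [|ne] := classic (p = q); [left|right; apply: X_anti].
have [|X X_pq] := @Aset_extend [:: p; q].
  move=> x y; rewrite !inE => /orP[]/eqP-> /orP[]/eqP->; try by left.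
    exact: pq.
  by case: pq => [->|/incomparable_sym]; [left|right].
by exists (inl X); split; apply: X_pq; rewrite !inE eqxx ?orbT.
Qed.

Lemma C_four_point : four_point (copred CR).
Proof.
have inr_of x y : copred CR x y -> (exists p, x = inr p) /\ (exists q, y = inr q).
  by move=> [a [/CR_inr ? /CR_inr ?]].
have cmp p q : ~ copred CR (inr p) (inr q) -> prefix_comparable p q.
  move=> npq; apply/negPn/negP => /incomparableE pq.
  by apply/npq/copredC_inr; right.
have incmp p q : copred CR (inr p) (inr q) -> p <> q -> ~~ prefix_comparable p q.
  by move=> /copredC_inr[//|/incomparableE].
move=> x x' z z' xx' zz'.
have [[p ?] [p' ?]] := inr_of _ _ xx'; have [[q ?] [q' ?]] := inr_of _ _ zz'; subst.
move=> /cmp pq /cmp pq' /cmp p'q /cmp p'q'.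
apply: NNPP => /not_or_and[ne_p ne_q].
apply: (incomparable_pairs_not_cross_comparable _ _ pq pq' p'q p'q').
- exact: incmp xx' (fun e => ne_p (congr1 inr e)).
- exact: incmp zz' (fun e => ne_q (congr1 inr e)).
Qed.

Lemma C_cliques k : cliques_have_common_pred CR k.
Proof.
move=> w w_clique.
pose p a := if w a is inr q then q else [::].
have w_inr a : a < k -> w a = inr (p a).
  move=> ak; have [? [/CR_inr[q e] _]] := w_clique a a ak ak.
  by rewrite /p e.
have [|X X_p] := @Aset_extend (map p (iota 0 k)).
  move=> _ _ /mapP[a + ->] /mapP[b + ->]; rewrite !mem_iota => ak bk.
  by apply/copredC_inr; rewrite -!w_inr //; apply: w_clique.
exists (inl X) => a ak; rewrite w_inr //; apply/X_p/map_f.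
by rewrite mem_iota.
Qed.

Section Models.
Variables (M : Type) (RM : M -> M -> Prop).
Hypothesis M_model : model_of_ThC RM.

Lemma model_four_point : four_point (copred RM).
Proof.
apply/holds_four_point_sentence/M_model.2; first exact: sentence_four_point.
exact/holds_four_point_sentence/C_four_point.
Qed.

Lemma model_cliques k : cliques_have_common_pred RM k.
Proof.
apply/holds_clique_sentence/M_model.2; first exact: sentence_clique.
exact/holds_clique_sentence/C_cliques.
Qed.
End Models.

(** * SOP_2 trees in models of Th(C) *)

Lemma copred_sym (M : Type) (RM : M -> M -> Prop) u w : copred RM u w -> copred RM w u.
Proof. by move=> [a [au aw]]; exists a. Qed.

Lemma restr_nth (t : seq bool) m : m <= size t -> restr (nth false t) m = take m t.
Proof.
move=> le_mt; apply: (@eq_from_nth _ false); first by rewrite size_mkseq size_takel.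
by move=> i; rewrite size_mkseq => lt_im; rewrite nth_mkseq // nth_take.
Qed.

Section SOP2Tree.
Variables (M : Type) (RM : M -> M -> Prop) (n : nat) (c : seq bool -> 'I_n.+1 -> M).
Hypothesis M_model : model_of_ThC RM.
Hypothesis branch_consistent : forall (eta : nat -> bool) k,
  exists x, forall m, m < k -> psi RM x (c (restr eta m)).
Hypothesis incomparable_inconsistent : forall eta nu, incomparable eta nu ->
  ~ exists x, psi RM x (c eta) /\ psi RM x (c nu).

Lemma copred_along_branch s t i j : prefix s t -> copred RM (c s i) (c t j).
Proof.
move=> st; have [x hx] := branch_consistent (nth false t) (size t).+1.
have x_take m : m <= size t -> psi RM x (c (take m t)).
  by move=> le_mt; rewrite -restr_nth //; apply: hx.
exists x; split; last by have := x_take _ (leqnn _); rewrite take_size.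
by move: (x_take _ (size_prefix st)); move: st; rewrite prefixE => /eqP->.
Qed.

Lemma cross_copred_consistent s t : (forall i j, copred RM (c s i) (c t j)) ->
  exists x, psi RM x (c s) /\ psi RM x (c t).
Proof.
move=> cross.
pose w a := if a < n.+1 then c s (inord a) else c t (inord (a - n.+1)).
have [a b _ _|x hx] := model_cliques M_model (w := w) (k := n.+1 + n.+1).
  have along u i j : copred RM (c u i) (c u j) := copred_along_branch i j (prefix_refl u).
  rewrite /w; do 2 case: ifP => _.
  - exact: along.
  - exact: cross.
  - exact/copred_sym/cross.
  - exact: along.
exists x; split=> i.
  by have := hx i (ltn_addr _ (ltn_ord i)); rewrite /w ltn_ord inord_val.
have lt_ni : n.+1 + i < n.+1 + n.+1 by rewrite ltn_add2l.
by have := hx _ lt_ni; rewrite /w ltnNge leq_addr addKn inord_val.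
Qed.

Lemma sop2_tree_array d : sop2_array (copred RM) n.+1 d (fun s i => c s (inord i)).
Proof.
split=> [s t i j _ _ st _ _|s t _ _ st]; first exact: copred_along_branch.
apply: NNPP => no_pair; apply: (incomparable_inconsistent st).
apply: cross_copred_consistent => i j; apply: NNPP => nD; apply: no_pair.
by exists i, j; rewrite !inord_val.
Qed.
End SOP2Tree.

Theorem proposition6p5 :
  forall n : nat, 1 <= n -> ~ witnesses_SOP2_ThC n.
Proof.
case=> [|n] // _ [M [RM [c [M_model [branch incomparable_pair]]]]].
have [d no_array] := no_sop2_array (model_four_point M_model) n.+1.
exact: no_array _ (sop2_tree_array M_model branch incomparable_pair d).
Qed.
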